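(* The map $\phi$ from the poset $\mathcal{FP}$ of nonempty faces of $V_O$ (ordered by inclusion) to the poset $\mathcal{SC}$, given by $\phi(F)=\bigcup_{\lambda\in\Xi_1,\ F\subseteq H_\lambda}\mathrm{supp}(\lambda)$, is injective and order-preserving: if $F_1\subseteq F_2$ then $\phi(F_1)\preceq\phi(F_2)$.
   Context: $G=(V,E)$ is a finite connected graph, possibly with parallel edges and loops; $\mathbb E$ is the set of oriented edges ($e$ and its reverse $\bar e$). Real $1$-chains $x:\mathbb E\to\mathbb R$ satisfy $x_{\bar e}=-x_e$; $\langle x,y\rangle=\sum_{e\in E}x_ey_e$, $q(x)=\langle x,x\rangle$. A flow satisfies $\sum_{e\text{ with tail }v}x_e=0$ at every vertex $v$; $H$ is the space of real flows and $\Lambda$ the lattice of integer flows. $V_O=\{x\in H: q(x)\le q(x-\mu)\ \forall\mu\in\Lambda\}$. For a flow $x$, $\mathrm{supp}(x)=\{e\in\mathbb E: x_e>0\}$. A circuit is an orientation of a cycle as a directed cycle; $x^C_e=1$ if $e\in C$, $-1$ if $\bar e\in C$, $0$ otherwise. $\Xi_1=\{x^C: C\text{ a circuit}\}$; for $\lambda\in\Xi_1$, $H_\lambda=\{x\in H: 2\langle x,\lambda\rangle=q(\lambda)\}$. $\mathcal{SC}$ is the set of pairs $(H',D)$ with $H'$ a subgraph of $G$ (identified with its edge set) and $D$ a strongly connected orientation of $H'$ (on each component any two vertices are joined by directed paths both ways), ordered by $(H_1,D_1)\preceq(H_2,D_2)$ iff $H_2\subseteq H_1$ and $D_2$ is the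 restriction of $D_1$ to $H_2$. *)

From HB Require Import structures.
From mathcomp Require Import all_boot all_order all_algebra.
From Stdlib Require Import Relations.
Set Implicit Arguments. Unset Strict Implicit. Unset Printing Implicit Defensive.
Import Order.TTheory GRing.Theory Num.Theory.
Local Open Scope ring_scope.

Section Graph.
Variables (R : realFieldType) (V E : finType) (src tgt : E -> V).
(* A multigraph (parallel edges / loops allowed): each edge e has a reference
   orientation from [src e] to [tgt e].  Oriented edges are pairs (e, b):
   (e, false) is e, (e, true) is its reverse \bar e. *)

Definition otail (o : E * bool) : V := if o.2 then tgt o.1 else src o.1.
Definition ohead (o : E * bool) : V := if o.2 then src o.1 else tgt o.1.

Definition adjG (u v : V) : Prop :=
  exists e, (src e = u /\ tgt e = v) \/ (src e = v /\ tgt e = u).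
Definition connected_graph : Prop := forall u v, clos_refl_trans V adjG u v.

(* Real 1-chains: values on reference orientations; x_{\bar e} = - x_e. *)
Definition ochain (x : E -> R) (o : E * bool) : R := if o.2 then - x o.1 else x o.1.
Definition inner (x y : E -> R) : R := \sum_(e : E) x e * y e.
Definition qf (x : E -> R) : R := inner x x.

Definition is_flow (x : E -> R) : Prop :=
  forall v : V, \sum_(o : E * bool | otail o == v) ochain x o = 0.
Definition is_int_flow (mu : E -> R) : Prop :=
  is_flow mu /\ exists z : E -> int, forall e, mu e = (z e)%:~R.

Definition in_VO (x : E -> R) : Prop :=
  is_flow x /\ forall mu, is_int_flow mu -> qf x <= qf (fun e => x e - mu e).

(* Nonempty faces of V_O (faces of the polytope V_O = exposed faces). *)
Definition face_VO (F : (E -> R) -> Prop) : Prop :=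
  exists (a : E -> R) (b : R),
    (forall y, in_VO y -> inner a y <= b) /\
    (forall x, F x <-> (in_VO x /\ inner a x = b)).
Definition nonempty_face_VO (F : (E -> R) -> Prop) : Prop :=
  face_VO F /\ exists x, F x.

Definition is_circuit (c : seq (E * bool)) : Prop :=
  [/\ c != [::], uniq (map fst c), uniq (map otail c)
    & cycle (fun o1 o2 => ohead o1 == otail o2) c].
Definition xC (c : seq (E * bool)) (e : E) : R :=
  if (e, false) \in c then 1 else if (e, true) \in c then -1 else 0.
Definition in_Xi1 (lam : E -> R) : Prop :=
  exists c, is_circuit c /\ forall e, lam e = xC c e.
Definition in_Hlam (lam x : E -> R) : Prop :=
  is_flow x /\ 2 * inner x lam = qf lam.
Definition supp (x : E -> R) (o : E * bool) : Prop := 0 < ochain x o.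

Definition phi (F : (E -> R) -> Prop) (o : E * bool) : Prop :=
  exists lam, [/\ in_Xi1 lam, (forall x, F x -> in_Hlam lam x) & supp lam o].

(* SC: a set D of oriented edges encodes the pair (H', D) with H' = und D. *)
Definition und (D : E * bool -> Prop) (e : E) : Prop := D (e, false) \/ D (e, true).
Definition is_orientation (D : E * bool -> Prop) : Prop :=
  forall e, ~ (D (e, false) /\ D (e, true)).
Definition darc (D : E * bool -> Prop) (u v : V) : Prop :=
  exists o, [/\ D o, otail o = u & ohead o = v].
Definition strongly_connected (D : E * bool -> Prop) : Prop :=
  forall u v, clos_refl_trans V (fun a b => darc D a b \/ darc D b a) u v ->
              clos_refl_trans V (darc D) u v.
Definition in_SC (D : E * bool -> Prop) : Prop :=
  is_orientation D /\ strongly_connected D.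
Definition SC_le (D1 D2 : E * bool -> Prop) : Prop :=
  (forall e, und D2 e -> und D1 e) /\ (forall o, D2 o <-> (D1 o /\ und D2 o.1)).

End Graph.

(** For a flow [x] give each arc [o] the cost [1 - 2 x_o]. The cost of a circuit [C] is then
    [q(x^C) - 2<x, x^C>], so [x] lies on [H_{x^C}] iff [C] has cost [0], and [x] lies in [V_O]
    iff every circuit has nonnegative cost: one direction tests [x] against the integer flows
    [x^C]; for the other, nonnegative circuit costs give a potential [p] with
    [p(head o) - p(tail o) <= 1 - 2 x_o] (least weights of simple paths), and since an integer
    flow [mu] is orthogonal to the coboundary of [p], the edgewise bound [|m| <= m^2] for
    integers yields [q(x) <= q(x - mu)].

    Relative to such a potential a circuit has cost [0] iff all its arcs are tight, so every
    arc of [phi(F)] is tight for every [x] in [F]. No edge is tight in both directions (the two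
    costs add up to [2]), and each arc of [phi(F)] returns along a circuit inside [phi(F)]; so
    [phi(F)] is a strongly connected orientation. Finally a face is determined by the circuits
    tight on it: moving a relative interior point of [F] slightly away from a point [y] of
    [V_O] on which these circuits are tight stays in [V_O], and the supporting inequality of
    [F] then puts [y] on [F]. As [phi(F)] records exactly the circuits tight on [F], and
    shrinking [F] enlarges [phi(F)], [phi] is injective and order-preserving. *)

From Pilot Require Import Defs.
From HB Require Import structures.
From mathcomp Require Import all_boot all_order all_algebra.
From mathcomp Require Import zify lra.
From Stdlib Require Import Relations Classical.
Set Implicit Arguments. Unset Strict Implicit. Unset Printing Implicit Defensive.
Import Order.TTheory GRing.Theory Num.Theory.
Local Open Scope ring_scope.

Section VoronoiCell.
Variables (R : realFieldType) (V E : finType) (src tgt : E -> V).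
Notation arc := (E * bool)%type.
Notation otail := (Defs.otail src tgt).
Notation ohead := (Defs.ohead src tgt).
Notation is_flow := (Defs.is_flow src tgt).
Notation in_VO := (@Defs.in_VO R V E src tgt).
Notation is_circuit := (Defs.is_circuit src tgt).
Notation xC := (Defs.xC R).

Definition orev (o : arc) : arc := (o.1, ~~ o.2).

Lemma orevK : involutive orev.
Proof. by case=> e b; rewrite /orev negbK. Qed.

Lemma otail_rev o : otail (orev o) = ohead o.
Proof. by case: o => e []. Qed.

Lemma ohead_rev o : ohead (orev o) = otail o.
Proof. by case: o => e []. Qed.

Lemma ochain_rev (x : E -> R) o : ochain x (orev o) = - ochain x o.
Proof. by case: o => e [] /=; rewrite /ochain /= ?opprK. Qed.

Lemma sum_arcs (F : arc -> R) :
  \sum_(o : arc) F o = \sum_(e : E) (F (e, false) + F (e, true)).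
Proof.
transitivity (\sum_e \sum_(b : bool) F (e, b)); first by rewrite pair_bigA; apply: eq_bigr => -[].
by apply: eq_bigr => e _; rewrite big_bool addrC.
Qed.

Lemma qfB (x y : E -> R) : qf (fun e => x e - y e) = qf x - 2 * inner x y + qf y.
Proof.
rewrite /qf /inner mulr_sumr -sumrB -big_split /=; apply: eq_bigr => e _.
by rewrite mulr2n; lra.
Qed.

(** * Circuit flows *)

Lemma mem_uniq_fst (c : seq arc) e b b' :
  uniq (map fst c) -> (e, b) \in c -> (e, b') \in c -> b = b'.
Proof.
elim: c => //= o c IH /andP[o_new u]; rewrite !in_cons.
case/orP=> [/eqP eo|ec]; case/orP=> [/eqP eo'|ec'] //; first by rewrite -eo in eo'; case: eo'.
- by case/negP: o_new; rewrite -eo; apply/mapP; exists (e, b').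
- by case/negP: o_new; rewrite -eo'; apply/mapP; exists (e, b).
- exact: IH.
Qed.

Lemma orev_notin (c : seq arc) o : uniq (map fst c) -> o \in c -> orev o \notin c.
Proof. by case: o => e b u oc; apply/negP => /(mem_uniq_fst u oc); case: b {oc}. Qed.

Lemma ochain_xC (c : seq arc) o : uniq (map fst c) ->
  ochain (xC c) o = if o \in c then 1 else if orev o \in c then -1 else 0.
Proof.
case: o => e [] u; rewrite /ochain /xC /orev //=.
case: ifP => h1; case: ifP => h2; rewrite ?opprK ?oppr0 //.
by have := mem_uniq_fst u h1 h2.
Qed.

Lemma supp_xC (lam : E -> R) (c : seq arc) o : lam =1 xC c -> uniq (map fst c) ->
  supp lam o <-> o \in c.
Proof.
move=> lamE u; rewrite /supp /ochain !lamE -/(ochain (xC c) o) ochain_xC //.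
case: ifP => _; first by split=> // _; exact: ltr01.
by case: ifP => _; split=> //; rewrite ?oppr_gt0 ?ltr10 ?ltxx.
Qed.

Lemma inner_xC (c : seq arc) (y : E -> R) : uniq (map fst c) ->
  inner y (xC c) = \sum_(o <- c) ochain y o.
Proof.
move=> u; rewrite big_uniq ?(map_uniq u) // big_mkcond sum_arcs.
apply: eq_bigr => e _; rewrite /xC /ochain /=.
case: ifP => h1; case: ifP => h2; try lra.
by have := mem_uniq_fst u h1 h2.
Qed.

Lemma qf_xC (c : seq arc) : uniq (map fst c) -> qf (xC c) = (size c)%:R.
Proof.
move=> u; rewrite /qf inner_xC // (eq_big_seq (fun _ => 1)).
  by rewrite -sum1_size natr_sum.
by move=> o oc; rewrite ochain_xC // oc.
Qed.

Definition oadj (o1 o2 : arc) := ohead o1 == otail o2.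

Lemma path_oadjE o s : path oadj o s = (map otail s == belast (ohead o) (map ohead s)).
Proof. by elim: s o => //= o' s IH o; rewrite IH eqseq_cons /oadj eq_sym. Qed.

Lemma cycle_oadj_perm (c : seq arc) : cycle oadj c -> perm_eq (map otail c) (map ohead c).
Proof.
case: c => // o c; rewrite /= path_oadjE !map_rcons belast_rcons => /eqP /= <-.
by rewrite perm_sym perm_rcons.
Qed.

Lemma cycle_oadj_sum (c : seq arc) (G : V -> R) : cycle oadj c ->
  \sum_(o <- c) G (otail o) = \sum_(o <- c) G (ohead o).
Proof.
move=> cy; rewrite -(big_map otail xpredT G) -(big_map ohead xpredT G).
exact/perm_big/cycle_oadj_perm.
Qed.

Lemma xC_flow (c : seq arc) : uniq (map fst c) -> cycle oadj c -> is_flow (xC c).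
Proof.
move=> u cy v; have uc := map_uniq u.
have count_in (P : pred arc) :
    \sum_(o | P o) ((o \in c)%:R : R) = \sum_(o <- c) (P o)%:R.
  rewrite big_uniq // big_mkcond [RHS]big_mkcond.
  by apply: eq_bigr => o _; case: (P o); case: (o \in c).
transitivity (\sum_(o | otail o == v) ((o \in c)%:R - (orev o \in c)%:R : R)).
  apply: eq_bigr => o _; rewrite ochain_xC //.
  case oc: (o \in c); first by rewrite (negbTE (orev_notin u oc)) subr0.
  by case: (orev o \in c); rewrite sub0r ?oppr0.
rewrite sumrB [X in _ - X](reindex_inj (inv_inj orevK)) /=.
rewrite [X in _ - X](eq_big (fun o => ohead o == v) (fun o => (o \in c)%:R)) => [|o|o _].
- by rewrite !count_in (cycle_oadj_sum (fun w => (w == v)%:R) cy) subrr.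
- by rewrite otail_rev.
- by rewrite orevK.
Qed.

Lemma xC_int_flow (c : seq arc) : is_circuit c -> is_int_flow src tgt (xC c).
Proof.
case=> _ u _ cy; split; first exact: xC_flow.
exists (fun e => if (e, false) \in c then 1 else if (e, true) \in c then -1 else 0) => e.
by rewrite /xC; case: ifP => _ //; case: ifP.
Qed.

(** * Circuit costs and potentials *)

Definition cost (x : E -> R) (o : arc) : R := 1 - 2 * ochain x o.
Definition weight (w : arc -> R) (s : seq arc) : R := \sum_(o <- s) w o.
Definition circuit_cost (x : E -> R) (c : seq arc) : R := weight (cost x) c.
Definition potential (w : arc -> R) (p : V -> R) : Prop :=
  forall o, p (ohead o) - p (otail o) <= w o.

Lemma cost_add_rev x o : cost x o + cost x (orev o) = 2.
Proof. by rewrite /cost ochain_rev; lra. Qed.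

Lemma circuit_costE x (c : seq arc) : uniq (map fst c) ->
  circuit_cost x c = qf (xC c) - 2 * inner x (xC c).
Proof.
move=> u; rewrite qf_xC // inner_xC // /circuit_cost /weight sumrB -mulr_sumr.
by rewrite -sum1_size natr_sum.
Qed.

Lemma circuit_cost_VO x c : in_VO x -> is_circuit c -> 0 <= circuit_cost x c.
Proof.
move=> [_ hx] hc; have [_ u _ _] := hc.
have := hx _ (xC_int_flow hc); rewrite qfB circuit_costE //; lra.
Qed.

Lemma flow_potential_orthogonal (mu : E -> R) (p : V -> R) : is_flow mu ->
  \sum_e mu e * (p (tgt e) - p (src e)) = 0.
Proof.
move=> fl; have : \sum_(o : arc) ochain mu o * p (otail o) = 0.
  rewrite (partition_big otail xpredT) //= big1 // => v _.
  rewrite (eq_bigr (fun o => ochain mu o * p v)) => [|o /eqP -> //].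
  by rewrite -mulr_suml fl mul0r.
rewrite sum_arcs => tails0; rewrite -[RHS]oppr0 -[in RHS]tails0 -sumrN.
apply: eq_bigr => e _.
by rewrite /ochain /= mulrBr mulNr; lra.
Qed.

(* Integrality of [z] enters only through [|z| <= z^2]. *)
Lemma int_edge_bound (z : int) (d x : R) :
  d <= 1 - 2 * x -> - d <= 1 + 2 * x -> 2 * (x * z%:~R) <= z%:~R * z%:~R - z%:~R * d.
Proof.
have [h1 h2] : 0 <= z * (z - 1) /\ 0 <= z * (z + 1) by split; nia.
have e1 : 0 <= (z%:~R : R) * (z%:~R - 1) by rewrite -[1]/(1%:~R) -intrB -intrM ler0z.
have e2 : 0 <= (z%:~R : R) * (z%:~R + 1) by rewrite -[1]/(1%:~R) -intrD -intrM ler0z.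
by move=> hd1 hd2; case: (lerP 0 (z%:~R : R)) => hz; nra.
Qed.

Lemma potential_VO x p : is_flow x -> potential (cost x) p -> in_VO x.
Proof.
move=> fx hp; split=> // mu [fm [z hz]].
rewrite qfB; have := flow_potential_orthogonal p fm.
suff : 2 * inner x mu <= qf mu - \sum_e mu e * (p (tgt e) - p (src e)) by lra.
rewrite /qf /inner mulr_sumr -sumrB; apply: ler_sum => e _; rewrite hz.
apply: int_edge_bound; first by have := hp (e, false); rewrite /cost /ochain.
by have := hp (e, true); rewrite /cost /ochain /=; lra.
Qed.

(** * Potentials from shortest simple paths *)

Definition spath (u : V) (s : seq arc) : bool :=
  [&& map otail s == belast u (map ohead s), uniq (u :: map ohead s) & uniq (map fst s)].
Definition pend (u : V) (s : seq arc) : V := last u (map ohead s).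

Lemma spath_size u s : spath u s -> (size s <= #|E|)%N.
Proof. by case/and3P => _ _ /card_uniqP; rewrite size_map => <-; apply: max_card. Qed.

Lemma spath_walk u s : spath u s -> rcons (map otail s) (pend u s) = u :: map ohead s.
Proof. by case/and3P => /eqP -> _ _; rewrite /pend -lastI. Qed.

Lemma pend_notin_tails u s : spath u s -> pend u s \notin map otail s.
Proof.
move=> sp; have := spath_walk sp; case/and3P: sp => _ u1 _ walk.
by move: u1; rewrite -walk rcons_uniq => /andP [].
Qed.

Lemma spath_cat u s1 s2 : spath u (s1 ++ s2) -> spath u s1 /\ spath (pend u s1) s2.
Proof.
case/and3P => /eqP walk u1 u2; rewrite !map_cat belast_cat in walk u1 u2.
rewrite cat_uniq in u2; case/and3P: u2 => u21 _ u22.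
rewrite -cat_cons cat_uniq in u1; case/and3P: u1 => u11 disj u12.
move/eqP: walk; rewrite eqseq_cat ?size_belast ?size_map // => /andP [w1 w2].
split; apply/and3P; split => //; rewrite /= u12 andbT.
by apply/negP => /(hasPn disj); rewrite /pend mem_last.
Qed.

Lemma spath_rcons u s o : spath u s -> otail o = pend u s ->
  ohead o \notin u :: map ohead s -> o.1 \notin map fst s -> spath u (rcons s o).
Proof.
move=> sp et nh nf; have walk := spath_walk sp; case/and3P: sp => _ u1 u2.
apply/and3P; split.
- by rewrite !map_rcons et walk belast_rcons.
- by rewrite map_rcons -rcons_cons rcons_uniq nh.
- by rewrite map_rcons rcons_uniq nf.
Qed.

Lemma pend_rcons u s o : pend u (rcons s o) = ohead o.
Proof. by rewrite /pend map_rcons last_rcons. Qed.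

Lemma pend_rcons_tail u s o : spath u (rcons s o) -> pend u s = otail o.
Proof.
case/and3P => /eqP + _ _; rewrite !map_rcons belast_rcons.
by move/(congr1 (last (otail o))); rewrite last_rcons /= => ->.
Qed.

Lemma spath_last_arc u s o : spath u s -> o \in s -> ohead o = pend u s ->
  exists s', s = rcons s' o.
Proof.
move=> + os; case/splitPr: os => s1 [|o2 s2] sp e; first by exists s1; rewrite cats1.
have [_ /and3P [_ /= /and3P [_ nin _] _]] := spath_cat sp.
move: e; rewrite /pend map_cat last_cat /= => e.
by case/negP: nin; rewrite {1}e; apply: mem_last.
Qed.

Lemma spath_split u s h : spath u s -> h \in u :: map ohead s ->
  exists s1 s2, [/\ s = s1 ++ s2, spath u s1, pend u s1 = h, spath h s2 & pend h s2 = pend u s].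
Proof.
move=> sp; rewrite in_cons => /orP [/eqP ->|/mapP [o' os ->]]; first by exists [::], s.
case/splitPr: os sp => s1 s2 sp; exists (rcons s1 o'), s2.
have sp' : spath u (rcons s1 o' ++ s2) by rewrite cat_rcons.
have [sp1 sp2] := spath_cat sp'; rewrite pend_rcons in sp2.
split; rewrite ?cat_rcons ?pend_rcons //.
by rewrite /pend -cat_rcons map_cat last_cat -/(pend u (rcons s1 o')) pend_rcons.
Qed.

Lemma spath_circuit h s o : spath h s -> pend h s = otail o -> ohead o = h ->
  o.1 \notin map fst s -> is_circuit (rcons s o).
Proof.
move=> sp et eh nf; have walk := spath_walk sp; case/and3P: sp => _ u1 u2.
split.
- by case: s {walk u1 u2 nf et}.
- by rewrite map_rcons rcons_uniq nf.
- by rewrite map_rcons -et walk.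
- rewrite (cycle_path o) last_rcons.
  by rewrite -/oadj path_oadjE !map_rcons belast_rcons eh -et walk.
Qed.

Section ShortestPaths.
Variable w : arc -> R.
Hypothesis circuit_weight_ge0 : forall c, is_circuit c -> 0 <= weight w c.
Hypothesis rev_weight_ge0 : forall o, 0 <= w o + w (orev o).

Lemma weight_rcons s o : weight w (rcons s o) = weight w s + w o.
Proof. by rewrite /weight big_rcons. Qed.

(* Appending [o] to a simple path ending at its tail either stays simple, or backtracks
   along the last arc (cheap by [rev_weight_ge0]), or closes a circuit whose weight is
   nonnegative and can be cut off. *)
Lemma spath_relax u0 s0 o : spath u0 s0 -> pend u0 s0 = otail o ->
  exists u s, [/\ spath u s, pend u s = ohead o & weight w s <= weight w s0 + w o].
Proof.
move=> sp0 e0; case: (boolP (o.1 \in map fst s0)) => [/mapP [o' o's0 eo]|fresh].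
  have o'E : o' = orev o.
    case: o' eo o's0 => e' b' /= <- o's0; have [eb|nb] := eqVneq b' o.2.
      rewrite eb -surjective_pairing in o's0.
      by case/negP: (pend_notin_tails sp0); rewrite e0; apply: map_f.
    by rewrite /orev; move: nb {o's0}; case: b'; case: (o.2).
  rewrite {}o'E in o's0.
  have last_arc : ohead (orev o) = pend u0 s0 by rewrite ohead_rev e0.
  have [s' es'] := spath_last_arc sp0 o's0 last_arc.
  rewrite es' -cats1 in sp0; have [sp' _] := spath_cat sp0; rewrite cats1 in sp0.
  exists u0, s'; split => //; first by rewrite (pend_rcons_tail sp0) otail_rev.
  by rewrite es' weight_rcons -addrA lerDl addrC.
case: (boolP (ohead o \in u0 :: map ohead s0)) => [on_s0|new].
  have [s1 [s2 [es sp1 e1 sp2 e2]]] := spath_split sp0 on_s0.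
  have fresh2 : o.1 \notin map fst s2.
    by apply: contra fresh; rewrite es map_cat mem_cat => ->; rewrite orbT.
  have := circuit_weight_ge0 (spath_circuit sp2 (etrans e2 e0) erefl fresh2).
  rewrite weight_rcons => hc; exists u0, s1; split => //.
  by rewrite es /weight big_cat /= -addrA lerDl.
exists u0, (rcons s0 o); split; rewrite ?pend_rcons ?weight_rcons //.
exact: spath_rcons.
Qed.

Definition shortest_spath (v : V) : V * {bseq #|E| of arc} :=
  [arg min_(x < (v, [bseq]) | spath x.1 x.2 && (pend x.1 x.2 == v)) weight w x.2]%O.

Lemma shortest_spathP v :
  let: (u0, s0) := shortest_spath v in
  [/\ spath u0 s0, pend u0 s0 = v &
      forall u s, spath u s -> pend u s = v -> weight w s0 <= weight w s].
Proof.
have trivial_path : spath v [bseq] && (pend v [bseq] == v) by rewrite /spath /pend /= eqxx.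
rewrite /shortest_spath; case: arg_minP => [|[u0 s0] /andP [sp0 /eqP e0] min] //.
split => // u s sp e; apply: (min (u, Bseq (spath_size sp))).
by rewrite /= sp e eqxx.
Qed.

(* Bellman-Ford: [p v] is the least weight of a simple path ending at [v], and [spath_relax]
   is the triangle inequality. *)
Lemma potential_exists : exists p, potential w p.
Proof.
exists (fun v => weight w (shortest_spath v).2) => o; rewrite lerBlDl.
have := shortest_spathP (otail o); have := shortest_spathP (ohead o).
case: (shortest_spath (ohead o)) => u1 s1 [_ _ min].
case: (shortest_spath (otail o)) => u0 s0 [sp0 e0 _] /=.
have [u [s [sp e le_s]]] := spath_relax sp0 e0.
exact: le_trans (min _ _ sp e) le_s.
Qed.

End ShortestPaths.

Lemma VO_potential x : in_VO x -> exists p, potential (cost x) p.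
Proof.
move=> Vx; apply: potential_exists => [c|o]; first exact: circuit_cost_VO.
by rewrite cost_add_rev.
Qed.

Lemma circuit_costs_VO x :
  is_flow x -> (forall c, is_circuit c -> 0 <= circuit_cost x c) -> in_VO x.
Proof.
move=> fx hc; have [|p hp] := potential_exists hc; last exact: potential_VO fx hp.
by move=> o; rewrite cost_add_rev.
Qed.

Lemma circuit_cost_eq0P x p c : potential (cost x) p -> is_circuit c ->
  circuit_cost x c = 0 <-> forall o, o \in c -> p (ohead o) - p (otail o) = cost x o.
Proof.
move=> hp [_ _ _ cy].
have -> : circuit_cost x c = \sum_(o <- c) (cost x o - (p (ohead o) - p (otail o))).
  by rewrite [RHS]sumrB [X in _ - X]sumrB (cycle_oadj_sum p cy) subrr subr0.
rewrite (rwP eqP) psumr_eq0 => [|o _]; last by rewrite subr_ge0.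
split=> [/allP tight o oc | tight].
  by move/(_ o oc): tight => /=; rewrite subr_eq0 => /eqP.
by apply/allP => o oc /=; rewrite tight ?subrr.
Qed.

Lemma Hlam_xC (lam : E -> R) c x : lam =1 xC c -> is_circuit c ->
  in_Hlam src tgt lam x <-> is_flow x /\ circuit_cost x c = 0.
Proof.
move=> lamE hc; have [_ u _ _] := hc.
have innerE : inner x lam = inner x (xC c) by apply: eq_bigr => e _; rewrite lamE.
have qfE : qf lam = qf (xC c) by apply: eq_bigr => e _; rewrite lamE.
rewrite /in_Hlam circuit_costE // innerE qfE.
by split=> -[fx h]; split=> //; lra.
Qed.

Lemma darc_path (D : arc -> Prop) o s : path oadj o s -> (forall o', o' \in s -> D o') ->
  clos_refl_trans V (darc src tgt D) (ohead o) (ohead (last o s)).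
Proof.
elim: s o => [|o' s IH] o /=; first by move=> _ _; apply: rt_refl.
case/andP => /eqP o_o' ps sD; apply: (rt_trans _ _ _ (ohead o')).
  by apply: rt_step; exists o'; split=> //; apply: sD; rewrite mem_head.
by apply: IH ps _ => o'' o''s; apply: sD; rewrite in_cons o''s orbT.
Qed.

Lemma cycle_darc_return (D : arc -> Prop) c o : cycle oadj c -> o \in c ->
  (forall o', o' \in c -> D o') -> clos_refl_trans V (darc src tgt D) (ohead o) (otail o).
Proof.
move=> cy oc cD; case: (rot_to oc) => i s rotE.
have : cycle oadj (o :: s) by rewrite -rotE rot_cycle.
rewrite /= rcons_path => /andP [ps /eqP <-]; apply: darc_path ps _ => o' o's.
by apply: cD; rewrite -(mem_rot i) rotE in_cons o's orbT.
Qed.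

Lemma strongly_connected_of_return (D : arc -> Prop) :
  (forall o, D o -> clos_refl_trans V (darc src tgt D) (ohead o) (otail o)) ->
  strongly_connected src tgt D.
Proof.
move=> back u v; elim=> [a b [ab|[o [Do <- <-]]] | a | a b c _ IH1 _ IH2].
- exact: rt_step.
- exact: back.
- exact: rt_refl.
- exact: rt_trans IH1 IH2.
Qed.

(** * Faces are determined by their tight circuits *)

Lemma halves : 2^-1 + 2^-1 = 1 :> R.
Proof. by rewrite [RHS](splitr 1) mul1r. Qed.

Definition comb (a b : R) (x y : E -> R) : E -> R := fun e => a * x e + b * y e.

Lemma comb_flow a b x y : is_flow x -> is_flow y -> is_flow (comb a b x y).
Proof.
move=> fx fy v; rewrite (eq_bigr (fun o => a * ochain x o + b * ochain y o)).
  by rewrite big_split /= -!mulr_sumr fx fy !mulr0 addr0.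
by move=> o _; rewrite /ochain /comb; case: o.2; rewrite // opprD -!mulrN.
Qed.

Lemma circuit_cost_comb a b x y c : a + b = 1 ->
  circuit_cost (comb a b x y) c = a * circuit_cost x c + b * circuit_cost y c.
Proof.
move=> ab; rewrite /circuit_cost /weight !mulr_sumr -big_split /=; apply: eq_bigr => o _.
rewrite /cost /ochain /comb; case: o.2; rewrite ?mulrN; nra.
Qed.

Lemma inner_comb a b f x y : inner f (comb a b x y) = a * inner f x + b * inner f y.
Proof.
rewrite /inner !mulr_sumr -big_split /=; apply: eq_bigr => e _.
by rewrite /comb mulrDr (mulrCA a) (mulrCA b).
Qed.

Lemma circuit_cost_VO_comb a b x y : 0 <= a -> 0 <= b -> a + b = 1 ->
  in_VO x -> in_VO y -> in_VO (comb a b x y).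
Proof.
move=> a0 b0 ab Vx Vy; apply: circuit_costs_VO; first by apply: comb_flow; [case: Vx | case: Vy].
move=> c hc; rewrite circuit_cost_comb //.
by apply: addr_ge0; apply: mulr_ge0 => //; apply: circuit_cost_VO.
Qed.

(* Circuits have at most #|E| arcs, so every circuit occurs in this finite list. *)
Definition short_seqs : seq (seq arc) := map val (enum {bseq #|E| of arc}).

Lemma circuit_in_short_seqs c : is_circuit c -> c \in short_seqs.
Proof.
case=> _ /card_uniqP + _ _; rewrite size_map => sizeE.
have size_c : (size c <= #|E|)%N by rewrite -sizeE max_card.
by apply/mapP; exists (Bseq size_c); rewrite ?mem_enum.
Qed.

Lemma small_step_exists (L : seq (seq arc)) (f g : seq arc -> R) (P : seq arc -> Prop) :
  (forall c, P c -> 0 < f c) ->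
  exists2 eps, 0 < eps & forall d, 0 <= d -> d <= eps ->
    forall c, c \in L -> P c -> d * (g c - f c) <= f c.
Proof.
move=> f_gt0; elim: L => [|c L [eps eps0 small]]; first by exists 1.
have [ec ec0 small_c] : exists2 ec, 0 < ec &
    forall d, 0 <= d -> d <= ec -> P c -> d * (g c - f c) <= f c.
  case: (lerP (g c - f c) 0) => sgn.
    by exists 1 => // d d0 _ Pc; apply: le_trans (ltW (f_gt0 _ Pc)); rewrite mulr_ge0_le0.
  case: (classic (P c)) => [Pc|nPc]; last by exists 1.
  exists (f c / (g c - f c)) => [|d d0 de _]; first by rewrite divr_gt0 ?f_gt0.
  by apply: le_trans (ler_wpM2r (ltW sgn) de) _; rewrite divfK ?gt_eqF.
exists (Order.min eps ec) => [|d d0]; first by rewrite lt_min eps0 ec0.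
rewrite le_min => /andP [de dec] c'; rewrite in_cons => /orP [/eqP ->|c'L]; first exact: small_c.
exact: small.
Qed.

Section Face.
Variables (F : (E -> R) -> Prop) (a : E -> R) (b : R).
Hypothesis a_le_b : forall y, in_VO y -> inner a y <= b.
Hypothesis FE : forall x, F x <-> (in_VO x /\ inner a x = b).

Lemma face_VO x : F x -> in_VO x.
Proof. by case/FE. Qed.

Lemma face_midpoint x1 x2 : F x1 -> F x2 -> F (comb 2^-1 2^-1 x1 x2).
Proof.
have half0 : 0 <= 2^-1 :> R by rewrite invr_ge0 ler0n.
move=> /FE [V1 a1] /FE [V2 a2]; apply/FE; split; first exact: circuit_cost_VO_comb halves V1 V2.
by rewrite inner_comb a1 a2 -mulrDl halves mul1r.
Qed.

Definition loose_on_face (c : seq arc) : Prop :=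
  is_circuit c /\ exists2 x, F x & 0 < circuit_cost x c.

(* Averaging witnesses one circuit at a time: a midpoint stays strictly loose where either
   endpoint is. *)
Lemma face_relint_point x0 (L : seq (seq arc)) : F x0 ->
  exists2 x, F x & forall c, c \in L -> loose_on_face c -> 0 < circuit_cost x c.
Proof.
move=> Fx0; elim: L => [|c L [x1 Fx1 loose_x1]]; first by exists x0.
have ge0 y c' : F y -> is_circuit c' -> 0 <= circuit_cost y c'.
  by move=> Fy; apply: circuit_cost_VO (face_VO Fy).
have half_gt0 : 0 < 2^-1 :> R by rewrite invr_gt0 ltr0n.
have [x1_loose | x1_tight] := ltrP 0 (circuit_cost x1 c).
  exists x1 => // c'; rewrite in_cons => /orP [/eqP -> //|]; exact: loose_x1.
case: (classic (loose_on_face c)) => [[hc [x' Fx' x'_loose]]|not_loose]; last first.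
  exists x1 => // c'; rewrite in_cons => /orP [/eqP -> //|]; exact: loose_x1.
exists (comb 2^-1 2^-1 x1 x'); first exact: face_midpoint.
move=> c' c'L lc'; have [hc' _] := lc'; rewrite circuit_cost_comb ?halves //.
have := ge0 _ _ Fx1 hc'; have := ge0 _ _ Fx' hc'.
move: c'L; rewrite in_cons => /orP [/eqP ->|c'L]; first nra.
have := loose_x1 c' c'L lc'; nra.
Qed.

Lemma face_of_tight_circuits x0 y : F x0 -> in_VO y ->
  (forall c, is_circuit c -> (forall x, F x -> circuit_cost x c = 0) -> circuit_cost y c = 0) ->
  F y.
Proof.
move=> Fx0 Vy y_tight; have [xs Fxs xs_loose] := face_relint_point short_seqs Fx0.
have [eps eps0 small] := small_step_exists short_seqs (circuit_cost y)
  (fun c (h : is_circuit c /\ 0 < circuit_cost xs c) => h.2).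
suff Vz : in_VO (comb (1 + eps) (- eps) xs y).
  have := a_le_b Vz; rewrite inner_comb; have [_ ->] := (FE xs).1 Fxs => a_z.
  by apply/FE; split=> //; apply: le_anti; rewrite a_le_b //=; nra.
apply: circuit_costs_VO; first by apply: comb_flow; [case: (face_VO Fxs) | case: Vy].
move=> c hc; rewrite circuit_cost_comb ?addrK //.
case: (classic (loose_on_face c)) => [loose|not_loose].
  have xs_pos := xs_loose c (circuit_in_short_seqs hc) loose.
  have := small eps (ltW eps0) (lexx eps) c (circuit_in_short_seqs hc) (conj hc xs_pos).
  nra.
have tight x : F x -> circuit_cost x c = 0.
  move=> Fx; have := circuit_cost_VO (face_VO Fx) hc.
  rewrite le_eqVlt => /orP [/eqP <- // | pos].
  by case: not_loose; split=> //; exists x.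
by rewrite (tight xs Fxs) (y_tight c hc tight) !mulr0 addr0.
Qed.

End Face.

(** * The map phi *)

Notation phi := (@Defs.phi R V E src tgt).

Lemma phi_circuit F o : phi F o ->
  exists c, [/\ is_circuit c, o \in c, forall x, F x -> circuit_cost x c = 0
              & forall o', o' \in c -> phi F o'].
Proof.
case=> lam [[c [hc lamE]] F_Hlam supp_o]; have [_ u _ _] := hc.
exists c; split => //.
- exact/(supp_xC o lamE u).
- by move=> x /F_Hlam /(Hlam_xC x lamE hc) [].
- move=> o' o'c; exists lam; split=> //; first by exists c.
  exact/(supp_xC o' lamE u).
Qed.

Lemma phi_tight_arc F x p o : F x -> potential (cost x) p -> phi F o ->
  p (ohead o) - p (otail o) = cost x o.
Proof.
move=> Fx hp /phi_circuit [c [hc oc F_tight _]].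
by apply: (circuit_cost_eq0P hp hc).1 oc; apply: F_tight.
Qed.

Lemma tight_circuit_phi F c : (forall x, F x -> in_VO x) -> is_circuit c ->
  (forall x, F x -> circuit_cost x c = 0) <-> (forall o, o \in c -> phi F o).
Proof.
move=> FV hc; have [_ u _ _] := hc; split=> [F_tight o oc | c_phi x Fx].
  exists (xC c); split; [by exists c | | exact/(supp_xC o (frefl _) u)].
  by move=> x Fx; apply/(Hlam_xC x (frefl _) hc); split; [case: (FV x Fx) | apply: F_tight].
have [p hp] := VO_potential (FV x Fx).
by apply/(circuit_cost_eq0P hp hc) => o oc; apply: phi_tight_arc Fx hp (c_phi o oc).
Qed.

Lemma phi_orientation F x : F x -> in_VO x -> is_orientation (phi F).
Proof.
move=> Fx Vx e [fwd bwd]; have [p hp] := VO_potential Vx.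
have := cost_add_rev x (e, false).
rewrite -(phi_tight_arc Fx hp fwd) -(phi_tight_arc Fx hp bwd) /Defs.ohead /Defs.otail /=.
by move/eqP; rewrite addrA subrK subrr eq_sym pnatr_eq0.
Qed.

Lemma phi_strongly_connected F : strongly_connected src tgt (phi F).
Proof.
apply: strongly_connected_of_return => o /phi_circuit [c [[_ _ _ cy] oc _ c_phi]].
exact: cycle_darc_return cy oc c_phi.
Qed.

Lemma nonempty_face_sub_VO F : nonempty_face_VO src tgt F -> forall x, F x -> in_VO x.
Proof. by case=> [[a [b [_ FE]]] _] x /FE []. Qed.

Lemma phi_in_SC F : nonempty_face_VO src tgt F -> in_SC src tgt (phi F).
Proof.
move=> hF; have [_ [x Fx]] := hF; split; last exact: phi_strongly_connected.
exact: phi_orientation Fx (nonempty_face_sub_VO hF Fx).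
Qed.

Lemma phi_antitone F1 F2 : (forall x, F1 x -> F2 x) -> forall o, phi F2 o -> phi F1 o.
Proof. by move=> sub o [lam [hlam F2_H supp_o]]; exists lam; split=> // x /sub /F2_H. Qed.

Lemma face_sub_of_phi F1 F2 :
  nonempty_face_VO src tgt F1 -> nonempty_face_VO src tgt F2 ->
  (forall o, phi F2 o -> phi F1 o) -> forall x, F1 x -> F2 x.
Proof.
move=> hF1 hF2 phi_sub x F1x; have [[a [b [a_le_b FE]]] [x2 F2x2]] := hF2.
apply: (face_of_tight_circuits a_le_b FE F2x2 (nonempty_face_sub_VO hF1 F1x)) => c hc F2_tight.
have c_phi2 := (tight_circuit_phi (nonempty_face_sub_VO hF2) hc).1 F2_tight.
apply: (tight_circuit_phi (nonempty_face_sub_VO hF1) hc).2 F1x => o oc.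
exact/phi_sub/c_phi2.
Qed.

End VoronoiCell.

Lemma SC_le_of_sub (E : finType) (D1 D2 : E * bool -> Prop) :
  is_orientation D1 -> (forall o, D2 o -> D1 o) -> SC_le D1 D2.
Proof.
move=> orient sub; split=> [e [D2e|D2e] | [e b]]; [by left; apply: sub | by right; apply: sub |].
split=> [D2o | [D1o [D2f|D2t]]] /=.
- by split; [apply: sub | case: b D2o => D2o; [right | left]].
- by case: b D1o D2f => D1o D2f //; case: (orient e); split=> //; apply: sub.
- by case: b D1o D2t => D1o D2t //; case: (orient e); split=> //; apply: sub.
Qed.

Theorem mainTheorem7 (R : realFieldType) (V E : finType) (src tgt : E -> V) :
  connected_graph src tgt ->
  (forall F : (E -> R) -> Prop, nonempty_face_VO src tgt F -> in_SC src tgt (phi src tgt F)) /\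
  (forall F1 F2 : (E -> R) -> Prop,
      nonempty_face_VO src tgt F1 -> nonempty_face_VO src tgt F2 ->
      (forall o, phi src tgt F1 o <-> phi src tgt F2 o) ->
      forall x, F1 x <-> F2 x) /\
  (forall F1 F2 : (E -> R) -> Prop,
      nonempty_face_VO src tgt F1 -> nonempty_face_VO src tgt F2 ->
      (forall x, F1 x -> F2 x) ->
      SC_le (phi src tgt F1) (phi src tgt F2)).
Proof.
move=> _; split; first exact: phi_in_SC.
split=> [F1 F2 hF1 hF2 same_phi x | F1 F2 hF1 hF2 sub].
  by split; [apply: (face_sub_of_phi hF1 hF2) | apply: (face_sub_of_phi hF2 hF1)];
    move=> o; rewrite same_phi.
apply: SC_le_of_sub (phi_antitone sub).
by have [_ [x Fx]] := hF1; apply: phi_orientation Fx (nonempty_face_sub_VO hF1 Fx).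
Qed.
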